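(* Bob can win the $2$-Expanded Coloring Game on an uncolored $P_4^+$, where $P_4^+$ is the tree with vertices $x_1,x_2,x_3,x_4,x_3'$ and edges $x_1x_2,\ x_2x_3,\ x_3x_4,\ x_3x_3'$.
   Context: A color is legal for an uncolored vertex $v$ if no neighbor of $v$ has that color. The $k$-coloring game on a (partially colored) graph: Alice and Bob alternate turns, Alice first, each coloring an uncolored vertex with a legal color from a set of $k$ colors; Bob wins if at some point an uncolored vertex has no legal color, Alice wins if all vertices become colored. The $k$-Expanded Coloring Game ($k$-ECG) on a partially colored forest is the same as the $k$-coloring game except that on her turn Alice may choose not to color a vertex, and if she does not color a vertex she may instead add to the forest a single new colored leaf (a new vertex joined to exactly one existing vertex, colored with one of the $k$ colors). *)

From mathcomp Require Import all_boot.
Set Implicit Arguments. Unset Strict Implicit. Unset Printing Implicit Defensive.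

(* A position of the k-Expanded Coloring Game: a (partially colored) graph
   with vertices 0 .. nv-1, an (undirected) edge list, and a partial
   coloring; colors are the naturals c < k. *)
Record ecg_state := ECGState {
  nv : nat;
  edges : seq (nat * nat);
  col : nat -> option nat
}.

Definition adj (s : ecg_state) (u v : nat) : Prop :=
  (u, v) \in edges s \/ (v, u) \in edges s.

Definition legal (k : nat) (s : ecg_state) (v c : nat) : Prop :=
  v < nv s /\ col s v = None /\ c < k /\
  (forall u, u < nv s -> adj s u v -> col s u <> Some c).

Definition stuck (k : nat) (s : ecg_state) : Prop :=
  exists v, v < nv s /\ col s v = None /\ (forall c, c < k -> ~ legal k s v c).

Definition all_colored (s : ecg_state) : Prop :=
  forall v, v < nv s -> col s v <> None.

Definition color_vertex (s : ecg_state) (v c : nat) : ecg_state :=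
  ECGState (nv s) (edges s) (fun w => if w == v then Some c else col s w).

Definition add_leaf (s : ecg_state) (u c : nat) : ecg_state :=
  ECGState (nv s).+1 ((nv s, u) :: edges s)
           (fun w => if w == nv s then Some c else col s w).

Inductive alice_move (k : nat) (s : ecg_state) : ecg_state -> Prop :=
| AM_color v c : legal k s v c -> alice_move k s (color_vertex s v c)
| AM_leaf u c : u < nv s -> c < k -> alice_move k s (add_leaf s u c)
| AM_pass : alice_move k s s.

Inductive bob_move (k : nat) (s : ecg_state) : ecg_state -> Prop :=
| BM_color v c : legal k s v c -> bob_move k s (color_vertex s v c).

(* bob_wins_A k s : Bob has a winning strategy from s with Alice to move;
   bob_wins_B k s : same with Bob to move.  (The game always terminates,
   since Bob colors a vertex each turn and Alice never creates uncolored
   vertices, so an inductive (finite-play) winning strategy is the right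
   notion.) *)
Inductive bob_wins_A (k : nat) : ecg_state -> Prop :=
| BWA_stuck s : stuck k s -> bob_wins_A k s
| BWA_move s : ~ all_colored s ->
    (forall s', alice_move k s s' -> bob_wins_B k s') -> bob_wins_A k s
with bob_wins_B (k : nat) : ecg_state -> Prop :=
| BWB_stuck s : stuck k s -> bob_wins_B k s
| BWB_move s s' : ~ all_colored s -> bob_move k s s' -> bob_wins_A k s' ->
    bob_wins_B k s.

Definition bob_wins_ECG (k : nat) (s : ecg_state) : Prop := bob_wins_A k s.

(* The uncolored P_4^+ : x1 = 0, x2 = 1, x3 = 2, x4 = 3, x3' = 4. *)
Definition P4plus : ecg_state :=
  ECGState 5 [:: (0, 1); (1, 2); (2, 3); (2, 4)] (fun _ => None).

(* Alice never creates uncolored vertices: every vertex she adds is a colored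
   leaf.  Its only influence on the game is that a leaf of color c hanging on
   an original vertex v forbids c at v; leaves hanging on added leaves are
   irrelevant.  A position is therefore faithfully abstracted by the coloring
   of the original tree together with a table of forbidden colors, and this
   abstract game is finite, since Bob colors an original vertex every round.
   On P_4^+ it lasts at most five rounds, and a search of its game tree,
   evaluated by vm_compute, finds a winning strategy for Bob. *)
From mathcomp Require Import all_boot.
From Stdlib Require Import Setoid.
Set Implicit Arguments. Unset Strict Implicit. Unset Printing Implicit Defensive.

(* vm_compute evaluates function arguments eagerly, so [all p s] and
   [has p s] would explore every subtree of the search; these versions stop
   at the first decisive element. *)
Fixpoint sall (T : Type) (p : T -> bool) (s : seq T) : bool :=
  if s is x :: s' then (if p x then sall p s' else false) else true.

Fixpoint shas (T : Type) (p : T -> bool) (s : seq T) : bool :=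
  if s is x :: s' then (if p x then true else shas p s') else false.

Lemma sallE (T : Type) (p : T -> bool) (s : seq T) : sall p s = all p s.
Proof. by elim: s => //= x s ->; case: (p x). Qed.

Lemma shasE (T : Type) (p : T -> bool) (s : seq T) : shas p s = has p s.
Proof. by elim: s => //= x s ->; case: (p x). Qed.

Lemma all_flatten_map (T : Type) (p : pred T) (g : nat -> seq T) (l : seq nat) x :
  all p (flatten (map g l)) -> x \in l -> all p (g x).
Proof.
elim: l => [//|y l IH] /=; rewrite all_cat in_cons => /andP [Hy Hl].
by case/orP => [/eqP -> // | /(IH Hl)].
Qed.

Section CoreGame.

Variables (k n : nat) (E : seq (nat * nat)).

Record core_pos := CorePos {
  ccol : nat -> option nat;
  cforb : nat -> nat -> bool
}.

Definition core_adj (u v : nat) : bool := ((u, v) \in E) || ((v, u) \in E).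

Definition core_legal (a : core_pos) (v c : nat) : bool :=
  (ccol a v == None) && ~~ cforb a v c &&
  all (fun u => core_adj u v ==> (ccol a u != Some c)) (iota 0 n).

Definition core_stuck (a : core_pos) : bool :=
  has (fun v => (ccol a v == None) && ~~ has (core_legal a v) (iota 0 k)) (iota 0 n).

Definition core_all_colored (a : core_pos) : bool :=
  all (fun v => ccol a v != None) (iota 0 n).

Definition core_color (a : core_pos) (v c : nat) : core_pos :=
  CorePos (fun w => if w == v then Some c else ccol a w) (cforb a).

Definition core_forbid (a : core_pos) (v c : nat) : core_pos :=
  CorePos (ccol a) (fun w d => ((w == v) && (d == c)) || cforb a w d).

Definition core_alice_moves (a : core_pos) : seq core_pos :=
  a :: flatten [seq [seq core_forbid a v c | c <- iota 0 k] ++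
                    [seq core_color a v c | c <- iota 0 k & core_legal a v c]
               | v <- iota 0 n].

Definition core_pairs : seq (nat * nat) := [seq (v, c) | v <- iota 0 n, c <- iota 0 k].

Definition bob_replies (win : core_pos -> bool) (a : core_pos) : bool :=
  if core_stuck a then true else if core_all_colored a then false else
  shas (fun vc => if core_legal a vc.1 vc.2 then win (core_color a vc.1 vc.2) else false)
       core_pairs.

Fixpoint core_bob_wins (m : nat) (a : core_pos) : bool :=
  if m is m'.+1 then
    if core_stuck a then true else if core_all_colored a then false
    else sall (bob_replies (core_bob_wins m')) (core_alice_moves a)
  else false.

Lemma core_bob_winsS m a :
  core_bob_wins m.+1 a =
  core_stuck a || ~~ core_all_colored a && all (bob_replies (core_bob_wins m)) (core_alice_moves a).
Proof. by rewrite /= sallE; case: core_stuck; case: core_all_colored. Qed.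

(* The core is [0, n); every vertex outside it is a colored leaf added by
   Alice, and [cforb a v c] records that such a leaf of color c hangs on v. *)
Record represents (a : core_pos) (s : ecg_state) : Prop := {
  rep_size : n <= nv s;
  rep_core_edges : {subset E <= edges s};
  rep_edges : forall x y, (x, y) \in edges s ->
    [/\ x < nv s, y < nv s & (x < n -> y < n -> (x, y) \in E)];
  rep_outer_colored : forall u, n <= u -> u < nv s -> col s u <> None;
  rep_col : forall v, v < n -> col s v = ccol a v;
  rep_forb : forall v c, v < n ->
    (cforb a v c <-> exists u, [/\ n <= u, u < nv s, adj s u v & col s u = Some c])
}.

Variables (a : core_pos) (s : ecg_state).
Hypothesis rep : represents a s.

Lemma core_lt_nv v : v < n -> v < nv s.
Proof. by move=> Hv; apply: leq_trans Hv (rep_size rep). Qed.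

Lemma legal_core v c : legal k s v c -> v < n.
Proof.
move=> [Hv [Hc _]]; case: (ltnP v n) => // Hn.
by case: (rep_outer_colored rep Hn Hv).
Qed.

Lemma legal_coreE v c : v < n -> legal k s v c <-> (c < k) && core_legal a v c.
Proof.
move=> Hv; split.
- move=> [_ [Hcol [-> Hadj]]]; rewrite /core_legal -(rep_col rep Hv) Hcol eqxx /=.
  apply/andP; split.
  + by apply/negP => /(rep_forb rep c Hv) [u [_ Hu Huv Hcu]]; exact: Hadj u Hu Huv Hcu.
  + apply/allP => u; rewrite mem_iota add0n => /andP [_ Hu]; apply/implyP => Huv.
    rewrite -(rep_col rep Hu); apply/eqP; apply: Hadj; first exact: core_lt_nv.
    by case/orP: Huv => Huv; [left | right]; apply: (rep_core_edges rep).
- case/andP => Hc /andP [/andP [/eqP Hcol Hforb] /allP Hall].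
  split; first exact: core_lt_nv.
  split; first by rewrite (rep_col rep Hv).
  split=> // u Hu Huv; case: (ltnP u n) => Hun.
  + have Hcore : core_adj u v.
      by case: Huv => /(rep_edges rep) [_ _ H]; rewrite /core_adj H // orbT.
    have := Hall u; rewrite mem_iota add0n Hun => /(_ isT) /implyP /(_ Hcore).
    by rewrite (rep_col rep Hun) => /eqP.
  + move=> Hcu; move/negP: Hforb; apply; apply/(rep_forb rep c Hv).
    by exists u; split.
Qed.

Lemma stuck_of_core : core_stuck a -> stuck k s.
Proof.
move=> /hasP [v]; rewrite mem_iota add0n => /andP [_ Hv] /andP [/eqP Hcol /hasPn Hnone].
exists v; split; first exact: core_lt_nv.
split; first by rewrite (rep_col rep Hv).
move=> c Hc /(legal_coreE c Hv) /andP [_ Hl].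
by move: (Hnone c); rewrite mem_iota add0n Hc Hl => /(_ isT).
Qed.

Lemma not_all_colored_of_core : ~~ core_all_colored a -> ~ all_colored s.
Proof.
move=> /allPn [v]; rewrite mem_iota add0n => /andP [_ Hv] /negPn /eqP Hcol Hall.
by apply: (Hall v); [exact: core_lt_nv | rewrite (rep_col rep Hv)].
Qed.

Lemma represents_color v c : v < n -> represents (core_color a v c) (color_vertex s v c).
Proof.
move=> Hv; have outer_ne u : n <= u -> (u == v) = false.
  by move=> Hu; apply/negbTE; apply: contraTneq Hu => ->; rewrite -ltnNge.
split => //=.
- exact: (rep_size rep).
- exact: (rep_core_edges rep).
- exact: (rep_edges rep).
- by move=> u Hu; rewrite outer_ne //; exact: (rep_outer_colored rep).
- by move=> w Hw; case: ifP => // _; exact: (rep_col rep).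
- move=> w d Hw; rewrite (rep_forb rep d Hw).
  by split=> -[u [Hu ? ? Hcu]]; exists u; move: Hcu; rewrite outer_ne.
Qed.

Lemma adj_add_leaf u c x v :
  adj (add_leaf s u c) x v <->
  (x == nv s) && (v == u) \/ (v == nv s) && (x == u) \/ adj s x v.
Proof.
rewrite /adj /= !in_cons !xpair_eqE; split.
- by case=> /orP [-> | H]; [left | right; right; left | right; left | right; right; right].
- by case=> [-> | [-> | [H | H]]]; [left | right | left; rewrite H orbT | right; rewrite H orbT].
Qed.

Lemma forb_add_leaf u c v d : v < n ->
  (exists x, [/\ n <= x, x < nv (add_leaf s u c), adj (add_leaf s u c) x v
             & col (add_leaf s u c) x = Some d])
  <-> (v == u) && (d == c) \/ cforb a v d.
Proof.
move=> Hv; have Hvn : (v == nv s) = false by apply/negbTE; rewrite neq_ltn core_lt_nv.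
rewrite (rep_forb rep d Hv) /=; split.
- move=> [x [Hx Hxn /adj_add_leaf Hxv]].
  case: Hxv => [/andP [/eqP -> /eqP ->] | [/andP [Ev _] | Hxv]].
  + by rewrite eqxx => -[->]; left; rewrite !eqxx.
  + by rewrite Hvn in Ev.
  + have Hxs : x < nv s by case: Hxv => /(rep_edges rep) [].
    by rewrite (ltn_eqF Hxs) => Hxd; right; exists x.
- case=> [/andP [/eqP -> /eqP ->] | [x [Hx Hxs Hxv Hxd]]].
  + exists (nv s); split; [exact: rep_size rep | by [] | | by rewrite eqxx].
    by apply/adj_add_leaf; left; rewrite !eqxx.
  + exists x; split; [by [] | exact: ltnW | by apply/adj_add_leaf; right; right |].
    by rewrite (ltn_eqF Hxs).
Qed.

Lemma represents_add_leaf u c : u < nv s ->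
  represents (if u < n then core_forbid a u c else a) (add_leaf s u c).
Proof.
move=> Hu; have core_col v : v < n -> col s v = ccol (if u < n then core_forbid a u c else a) v.
  by move=> Hv; case: (u < n); exact: (rep_col rep).
split => /=.
- exact: leq_trans (rep_size rep) (leqnSn _).
- by move=> e He; rewrite in_cons (rep_core_edges rep He) orbT.
- move=> x y; rewrite in_cons xpair_eqE => /orP [/andP [/eqP -> /eqP ->] | He].
  + by split=> //; [exact: ltnW | rewrite ltnNge (rep_size rep)].
  + by case: (rep_edges rep He) => Hx Hy HE; split=> //; exact: ltnW.
- move=> v Hv; rewrite ltnS leq_eqVlt => /orP [/eqP -> | Hvs]; first by rewrite eqxx.
  by rewrite (ltn_eqF Hvs); exact: (rep_outer_colored rep).
- by move=> v Hv; rewrite (ltn_eqF (core_lt_nv Hv)) core_col.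
- move=> v d Hv; rewrite forb_add_leaf //; case: ifP => Hun /=.
  + by case: ((v == u) && (d == c)); split=> [|[]] //; [left | right].
  + split=> [|[/andP [/eqP Evu _] | //]]; first by right.
    by move: Hun; rewrite -Evu Hv.
Qed.

Lemma alice_move_represented (P : pred core_pos) s' :
  alice_move k s s' -> all P (core_alice_moves a) ->
  exists2 a', P a' & represents a' s'.
Proof.
rewrite /core_alice_moves /= => Hmove /andP [Pa Hall].
case: Hmove => [v c Hl | u c Hu Hc | ]; last by exists a.
- have Hv := legal_core Hl; move/(legal_coreE c Hv): Hl => /andP [Hc Hl].
  exists (core_color a v c); last exact: represents_color.
  have := all_flatten_map Hall (x := v); rewrite mem_iota Hv => /(_ isT).
  rewrite all_cat => /andP [_]; rewrite all_map all_filter => /allP /(_ c).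
  by rewrite mem_iota Hc => /(_ isT) /implyP /(_ Hl).
- have := represents_add_leaf c Hu; case: ifP => Hun Hrep; last by exists a.
  exists (core_forbid a u c) => //.
  have := all_flatten_map Hall (x := u); rewrite mem_iota Hun => /(_ isT).
  by rewrite all_cat all_map => /andP [/allP /(_ c) + _]; rewrite mem_iota Hc; apply.
Qed.

End CoreGame.

Lemma bob_wins_of_core k n E m a s :
  represents n E a s -> core_bob_wins k n E m a -> bob_wins_A k s.
Proof.
elim: m a s => [//|m IH] a s rep; rewrite core_bob_winsS.
case/orP => [St | /andP [NA Hall]]; first exact/BWA_stuck/(stuck_of_core rep).
apply: BWA_move => [|s' Hmove]; first exact: not_all_colored_of_core rep NA.
have [a' Hreply rep'] := alice_move_represented rep Hmove Hall.
move: Hreply; rewrite /bob_replies shasE.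
case: ifP => [St _ | _]; first exact/BWB_stuck/(stuck_of_core rep').
case: ifP => // NA' /hasP [[v c]] /allpairsP [[v' c'] []].
rewrite !mem_iota !add0n => /andP [_ Hv] /andP [_ Hc] [-> ->] /=.
case: ifP => // Hl Hwin.
apply: (BWB_move (s' := color_vertex s' v' c')).
- exact: not_all_colored_of_core rep' (negbT NA').
- by apply: BM_color; apply/(legal_coreE k rep' c' Hv); rewrite Hc.
- exact: IH (represents_color rep' c' Hv) Hwin.
Qed.

Definition core_start : core_pos := CorePos (fun _ => None) (fun _ _ => false).

Lemma represents_uncolored n E :
  all (fun e => (e.1 < n) && (e.2 < n)) E ->
  represents n E core_start (ECGState n E (fun _ => None)).
Proof.
move=> /allP HE; split => //= [x y Hxy | u Hu Hun | v c _].
- by have /andP [] := HE _ Hxy.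
- by move: Hu; rewrite leqNgt Hun.
- by split=> // -[u [Hu Hun _ _]]; move: Hu; rewrite leqNgt Hun.
Qed.

Theorem lemma4p2 : bob_wins_ECG 2 P4plus.
Proof.
apply: (@bob_wins_of_core 2 5 (edges P4plus) 5 core_start).
- exact: represents_uncolored.
- by vm_compute.
Qed.
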